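(* Let $k\ge 2$, and let $p,q$ be real polynomials with $\deg p=k$, $\deg q=k-1$, whose roots are real, simple and strictly interlacing, with roots of $p$ denoted $p_1<\dots<p_k$. Let $r>0$ and $\varphi\in(-\pi,\pi]$. Then each open disk $D_j$ ($j=1,\dots,k-1$), as well as the region $\{z\in\mathbb{C}:|z-\frac{p_1+p_k}{2}|>\frac{p_k-p_1}{2}\}$, contains at most one solution $z$ of the equation $\frac{q(z)}{p(z)}=re^{i\varphi}$.
   Context: $D_j$ denotes the open disk having the segment $[p_j,p_{j+1}]$ as a diameter (center $\frac{p_j+p_{j+1}}2$, radius $\frac{p_{j+1}-p_j}2$). *)

From Stdlib Require Import Reals Lra List.
Open Scope R_scope.

(* Complex numbers as (real part, imaginary part). *)
Definition C := (R * R)%type.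
Definition Cof (x : R) : C := (x, 0).
Definition Cadd (z w : C) : C := (fst z + fst w, snd z + snd w).
Definition Csub (z w : C) : C := (fst z - fst w, snd z - snd w).
Definition Cmul (z w : C) : C :=
  (fst z * fst w - snd z * snd w, fst z * snd w + snd z * fst w).
Definition Cinv (z : C) : C :=
  (fst z / (fst z ^ 2 + snd z ^ 2), - snd z / (fst z ^ 2 + snd z ^ 2)).
Definition Cdiv (z w : C) : C := Cmul z (Cinv w).
Definition Cnorm (z : C) : R := sqrt (fst z ^ 2 + snd z ^ 2).
Definition Cpolar (r phi : R) : C := (r * cos phi, r * sin phi).

(* Real polynomials: list of coefficients in increasing degree order,
   [a0; a1; ...; an] represents a0 + a1 X + ... + an X^n. *)
Definition rpoly := list R.
Definition peval (p : rpoly) (x : R) : R :=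
  fold_right (fun a acc => a + x * acc) 0 p.
Definition pevalC (p : rpoly) (z : C) : C :=
  fold_right (fun a acc => Cadd (Cof a) (Cmul z acc)) (0, 0) p.
Definition has_degree (p : rpoly) (n : nat) : Prop :=
  length p = S n /\ nth n p 0 <> 0.

(* z solves q(z)/p(z) = w (the quotient must be defined: p(z) <> 0). *)
Definition is_solution (p q : rpoly) (w z : C) : Prop :=
  pevalC p z <> (0, 0) /\ Cdiv (pevalC q z) (pevalC p z) = w.

Definition in_diam_disk (a b : R) (z : C) : Prop :=
  Cnorm (Csub z (Cof ((a + b) / 2))) < (b - a) / 2.
Definition in_exterior (a b : R) (z : C) : Prop :=
  Cnorm (Csub z (Cof ((a + b) / 2))) > (b - a) / 2.

Definition at_most_one (P : C -> Prop) : Prop :=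
  forall z1 z2, P z1 -> P z2 -> z1 = z2.

(* Since the roots interlace, all residues of [q/p] at the roots of [p] have the same sign:
   [q(z)/p(z) = c * sum_j rho_j / (z - p_j)] with every [rho_j > 0].  If [z1 <> z2] both solve
   [q/p = w], subtracting the two expansions gives [sum_j rho_j / ((z1 - p_j) (z2 - p_j)) = 0].
   For [u] in [D_j], each [u - p_i] is, up to sign, a nonnegative combination of [u - p_j] and
   [p_(j+1) - u], and these two make an acute angle since [u] sees the diameter under an obtuse
   one; in the exterior region the same holds with [u - p_1], [u - p_k] and [p_1 <= p_i <= p_k].
   Products of vectors from two acute cones lie in one open half-plane, so the terms of the sum
   above do too, and the sum cannot vanish. *)

From Pilot Require Import Defs.
From Stdlib Require Import Reals Lra Lia Psatz List.
Import Defs.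
Open Scope R_scope.

Definition C0 : C := (0, 0).
Definition C1 : C := (1, 0).
Definition Copp (z : C) : C := (- fst z, - snd z).
Definition Cconj (z : C) : C := (fst z, - snd z).

Lemma C_ext (z w : C) : fst z = fst w -> snd z = snd w -> z = w.
Proof. destruct z, w; simpl; intros; subst; auto. Qed.

Lemma C_ring : ring_theory C0 C1 Cadd Cmul Csub Copp (@eq C).
Proof.
  constructor; intros; apply C_ext; unfold Cadd, Cmul, Csub, Copp, C0, C1; simpl; ring.
Qed.
Add Ring C_ring : C_ring.

Lemma C_norm2_pos (z : C) : z <> C0 -> 0 < fst z ^ 2 + snd z ^ 2.
Proof.
  destruct z as [x y]; simpl; intros Hz.
  destruct (Req_dec x 0) as [->|]; [|nra].
  destruct (Req_dec y 0) as [->|]; [now elim Hz | nra].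
Qed.

Lemma C_field : field_theory C0 C1 Cadd Cmul Csub Copp Cdiv Cinv (@eq C).
Proof.
  constructor.
  - exact C_ring.
  - intro H; injection H; lra.
  - reflexivity.
  - intros z Hz. pose proof (C_norm2_pos z Hz).
    apply C_ext; unfold Cinv, Cmul, C1; simpl; field; lra.
Qed.
Add Field C_field : C_field.

Lemma Cof_add x y : Cof (x + y) = Cadd (Cof x) (Cof y).
Proof. apply C_ext; simpl; ring. Qed.

Lemma Cof_sub x y : Cof (x - y) = Csub (Cof x) (Cof y).
Proof. apply C_ext; simpl; ring. Qed.

Lemma Cof_mul x y : Cof (x * y) = Cmul (Cof x) (Cof y).
Proof. apply C_ext; simpl; ring. Qed.

Lemma Cof_inv x : x <> 0 -> Cof (/ x) = Cinv (Cof x).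
Proof. intros; apply C_ext; simpl; field; auto. Qed.

Lemma Cof_inj x y : Cof x = Cof y -> x = y.
Proof. intro H; injection H; auto. Qed.

Lemma Cof_neq0 x : x <> 0 -> Cof x <> C0.
Proof. intros Hx E; apply Hx; injection E; auto. Qed.

Lemma Cmul_neq0 z w : z <> C0 -> w <> C0 -> Cmul z w <> C0.
Proof.
  intros Hz Hw E. apply Hw.
  replace w with (Cmul (Cinv z) (Cmul z w)) by (field; auto).
  rewrite E; ring.
Qed.

Lemma Csub_eq0 z w : Csub z w = C0 -> z = w.
Proof. destruct z, w; unfold Csub, C0; simpl; intro E; injection E; intros; f_equal; lra. Qed.

Lemma Re_pos_neq0 l z : 0 < fst (Cmul l z) -> z <> C0.
Proof. intros H ->; destruct l; unfold Cmul, C0 in H; simpl in H; lra. Qed.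

(* [1/X = conj X / |X|^2], so [l X] and [conj l / X] have real parts of the same sign. *)
Lemma Re_conj_inv_pos l X : 0 < fst (Cmul l X) -> 0 < fst (Cmul (Cconj l) (Cinv X)).
Proof.
  intros H. pose proof (C_norm2_pos X (Re_pos_neq0 l X H)) as Hn.
  destruct l as [l1 l2], X as [x y]; unfold Cmul, Cconj, Cinv in *; cbn [fst snd] in *.
  replace (l1 * (x / (x ^ 2 + y ^ 2)) - - l2 * (- y / (x ^ 2 + y ^ 2)))
    with ((l1 * x - l2 * y) / (x ^ 2 + y ^ 2)) by (field; lra).
  apply Rdiv_lt_0_compat; lra.
Qed.

Lemma Cpolar_neq0 r phi : 0 < r -> Cpolar r phi <> C0.
Proof.
  intros hr E. unfold Cpolar, C0 in E. injection E; intros Es Ec.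
  pose proof (sin2_cos2 phi) as H1. unfold Rsqr in H1.
  assert (cos phi = 0) by (apply Rmult_integral in Ec as [|]; [lra|auto]).
  assert (sin phi = 0) by (apply Rmult_integral in Es as [|]; [lra|auto]).
  nra.
Qed.

Fixpoint sumC (n : nat) (f : nat -> C) : C :=
  match n with O => C0 | S m => Cadd (sumC m f) (f (S m)) end.
Fixpoint prodC (n : nat) (f : nat -> C) : C :=
  match n with O => C1 | S m => Cmul (prodC m f) (f (S m)) end.
Fixpoint prodR (n : nat) (f : nat -> R) : R :=
  match n with O => 1 | S m => prodR m f * f (S m) end.

Lemma sumC_S n f : sumC (S n) f = Cadd (sumC n f) (f (S n)).
Proof. reflexivity. Qed.

Lemma sumC_ext n f g :
  (forall j, (1 <= j <= n)%nat -> f j = g j) -> sumC n f = sumC n g.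
Proof.
  induction n; simpl; intros H; auto.
  rewrite IHn by (intros; apply H; lia). rewrite H by lia. reflexivity.
Qed.

Lemma prodC_ext n f g :
  (forall j, (1 <= j <= n)%nat -> f j = g j) -> prodC n f = prodC n g.
Proof.
  induction n; simpl; intros H; auto.
  rewrite IHn by (intros; apply H; lia). rewrite H by lia. reflexivity.
Qed.

Lemma sumC_add n f g :
  sumC n (fun j => Cadd (f j) (g j)) = Cadd (sumC n f) (sumC n g).
Proof. induction n; simpl; [apply C_ext; simpl; ring | rewrite IHn; ring]. Qed.

Lemma sumC_mull n c f : sumC n (fun j => Cmul c (f j)) = Cmul c (sumC n f).
Proof. induction n; simpl; [apply C_ext; simpl; ring | rewrite IHn; ring]. Qed.

Lemma sumC_Re_pos n f : (1 <= n)%nat ->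
  (forall j, (1 <= j <= n)%nat -> 0 < fst (f j)) -> 0 < fst (sumC n f).
Proof.
  induction n as [|[|n] IH]; intros Hn Hf; [lia| |].
  - specialize (Hf 1%nat ltac:(lia)). simpl; lra.
  - change (0 < fst (sumC (S n) f) + fst (f (S (S n)))).
    assert (0 < fst (sumC (S n) f)) by (apply IH; [lia | intros; apply Hf; lia]).
    specialize (Hf (S (S n)) ltac:(lia)). lra.
Qed.

Lemma prodC_Cof n f : prodC n (fun j => Cof (f j)) = Cof (prodR n f).
Proof. induction n; simpl; [reflexivity | rewrite IHn, Cof_mul; reflexivity]. Qed.

Lemma prodC_neq0 n f :
  (forall j, (1 <= j <= n)%nat -> f j <> C0) -> prodC n f <> C0.
Proof.
  induction n; simpl; intros H.
  - intro E; injection E; lra.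
  - apply Cmul_neq0; [apply IHn; intros|]; apply H; lia.
Qed.

Lemma prodR_neq0 n f : (forall j, (1 <= j <= n)%nat -> f j <> 0) -> prodR n f <> 0.
Proof.
  induction n; simpl; intros H; [lra|].
  apply Rmult_integral_contrapositive_currified; [apply IHn; intros|]; apply H; lia.
Qed.

Lemma prodR_pos n f : (forall j, (1 <= j <= n)%nat -> 0 < f j) -> 0 < prodR n f.
Proof.
  induction n; simpl; intros H; [lra|].
  apply Rmult_lt_0_compat; [apply IHn; intros|]; apply H; lia.
Qed.

Lemma prodR_mul n f g : prodR n (fun j => f j * g j) = prodR n f * prodR n g.
Proof. induction n; simpl; [ring | rewrite IHn; ring]. Qed.

Lemma pevalC_Cof P x : pevalC P (Cof x) = Cof (peval P x).
Proof.
  induction P as [|a P IH]; simpl; [reflexivity|].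
  rewrite IH. apply C_ext; simpl; ring.
Qed.

Lemma Csub_Cof_neq0_of_root P z t :
  pevalC P z <> C0 -> peval P t = 0 -> Csub z (Cof t) <> C0.
Proof.
  intros Hz Ht E. apply Hz. rewrite (Csub_eq0 _ _ E), pevalC_Cof, Ht. reflexivity.
Qed.

(* Synthetic division by [X - a]; the remainder is [peval P a]. *)
Fixpoint synth_div (P : rpoly) (a : R) : rpoly :=
  match P with
  | nil | _ :: nil => nil
  | _ :: P' => peval P' a :: synth_div P' a
  end.

Lemma length_synth_div P a : length (synth_div P a) = pred (length P).
Proof.
  induction P as [|c [|d P'] IH]; auto.
  change (S (length (synth_div (d :: P') a)) = length (d :: P')). rewrite IH. auto.
Qed.

Lemma pevalC_synth_div P a z :
  pevalC P z = Cadd (Cof (peval P a)) (Cmul (Csub z (Cof a)) (pevalC (synth_div P a) z)).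
Proof.
  induction P as [|c [|d P'] IH]; try (apply C_ext; simpl; ring).
  change (Cadd (Cof c) (Cmul z (pevalC (d :: P') z)) =
    Cadd (Cof (c + a * peval (d :: P') a))
      (Cmul (Csub z (Cof a))
         (Cadd (Cof (peval (d :: P') a)) (Cmul z (pevalC (synth_div (d :: P') a) z))))).
  rewrite IH, Cof_add, Cof_mul. ring.
Qed.

Lemma peval_synth_div P a x :
  peval P x = peval P a + (x - a) * peval (synth_div P a) x.
Proof.
  apply Cof_inj. rewrite <- pevalC_Cof, (pevalC_synth_div P a), pevalC_Cof.
  rewrite Cof_add, Cof_mul, Cof_sub. reflexivity.
Qed.

Definition distinct_nodes (a : nat -> R) (n : nat) :=
  forall i j, (1 <= i <= n)%nat -> (1 <= j <= n)%nat -> i <> j -> a i <> a j.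

Lemma distinct_nodes_pred a n : distinct_nodes a (S n) -> distinct_nodes a n.
Proof. intros Hd i j Hi Hj; apply Hd; lia. Qed.

Definition node_poly (a : nat -> R) (n : nat) (z : C) : C :=
  prodC n (fun i => Csub z (Cof (a i))).

Lemma node_poly_neq0 a n z :
  (forall i, (1 <= i <= n)%nat -> Csub z (Cof (a i)) <> C0) -> node_poly a n z <> C0.
Proof. apply prodC_neq0. Qed.

Lemma pevalC_factor n : forall P (a : nat -> R),
  (length P <= S n)%nat -> distinct_nodes a n ->
  (forall i, (1 <= i <= n)%nat -> peval P (a i) = 0) ->
  exists L, forall z, pevalC P z = Cmul (Cof L) (node_poly a n z).
Proof.
  induction n; intros P a Hl Hd Hr.
  - destruct P as [|c [|d P']]; simpl in Hl; [exists 0 | exists c | lia];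
      intros z; apply C_ext; simpl; ring.
  - destruct (IHn (synth_div P (a (S n))) a) as [L HL].
    + rewrite length_synth_div. lia.
    + exact (distinct_nodes_pred a n Hd).
    + intros i Hi. pose proof (peval_synth_div P (a (S n)) (a i)) as E.
      rewrite (Hr i), (Hr (S n)) in E by lia.
      assert (a i - a (S n) <> 0) by (apply Rminus_eq_contra, Hd; lia).
      rewrite Rplus_0_l in E. symmetry in E.
      apply Rmult_integral in E as [|]; [lra | auto].
    + exists L. intro z.
      rewrite (pevalC_synth_div P (a (S n)) z), HL, (Hr (S n)) by lia.
      change (node_poly a (S n) z) with (Cmul (node_poly a n z) (Csub z (Cof (a (S n))))).
      change (Cof 0) with C0. ring.
Qed.

Lemma Cof_div x y : y <> 0 -> Cof (x / y) = Cmul (Cof x) (Cinv (Cof y)).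
Proof. intros; unfold Rdiv; rewrite Cof_mul, Cof_inv; auto. Qed.

Definition pfrac (n : nat) (a rho : nat -> R) (z : C) : C :=
  sumC n (fun j => Cmul (Cof (rho j)) (Cinv (Csub z (Cof (a j))))).

Definition skip (j i : nat) : nat := if (i <? j)%nat then i else S i.

(* For nodes [a 1, ..., a (S m)]: [node_prod a m j = prod_(i <> j) (a j - a i)]. *)
Definition node_prod (a : nat -> R) (m j : nat) : R :=
  prodR m (fun i => a j - a (skip j i)).

Lemma node_prod_S a m j : (1 <= j <= S m)%nat ->
  node_prod a (S m) j = node_prod a m j * (a j - a (S (S m))).
Proof.
  intros Hj. unfold node_prod at 1; simpl. unfold skip at 2.
  replace (S m <? j)%nat with false by (symmetry; apply Nat.ltb_ge; lia). reflexivity.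
Qed.

Lemma node_prod_last a m : Cof (node_prod a m (S m)) = node_poly a m (Cof (a (S m))).
Proof.
  unfold node_prod, node_poly. rewrite <- prodC_Cof. apply prodC_ext. intros i Hi.
  unfold skip. replace (i <? S m)%nat with true by (symmetry; apply Nat.ltb_lt; lia).
  apply Cof_sub.
Qed.

Lemma node_prod_neq0 a m j :
  distinct_nodes a (S m) -> (1 <= j <= S m)%nat -> node_prod a m j <> 0.
Proof.
  intros Hd Hj. apply prodR_neq0. intros i Hi. apply Rminus_eq_contra.
  unfold skip. destruct (i <? j)%nat eqn:E;
    [apply Nat.ltb_lt in E | apply Nat.ltb_ge in E]; apply Hd; lia.
Qed.

Lemma inv_node_poly_partial_fractions m : forall a z,
  distinct_nodes a (S m) ->
  (forall i, (1 <= i <= S m)%nat -> Csub z (Cof (a i)) <> C0) ->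
  Cinv (node_poly a (S m) z) = pfrac (S m) a (fun j => / node_prod a m j) z.
Proof.
  unfold pfrac. induction m as [|m IH]; intros a z Hd Hz.
  - assert (Csub z (Cof (a 1%nat)) <> C0) by (apply Hz; lia).
    unfold node_poly, node_prod; cbn [prodR prodC sumC]. rewrite Rinv_1. change (Cof 1) with C1.
    field; auto.
  - set (b := a (S (S m))).
    assert (Hd' := distinct_nodes_pred a (S m) Hd).
    assert (Hzb : Csub z (Cof b) <> C0) by (apply Hz; lia).
    assert (Hlast : node_prod a (S m) (S (S m)) <> 0) by (apply node_prod_neq0; [auto | lia]).
    assert (Iz := IH a z Hd' ltac:(intros; apply Hz; lia)).
    assert (Ib := IH a (Cof b) Hd'
                   ltac:(intros; rewrite <- Cof_sub; apply Cof_neq0, Rminus_eq_contra, Hd; lia)).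
    change (node_poly a (S (S m)) z) with (Cmul (node_poly a (S m) z) (Csub z (Cof b))).
    rewrite sumC_S, Cof_inv, node_prod_last by auto. fold b. rewrite Ib.
    assert (node_poly a (S m) z <> C0) by (apply node_poly_neq0; intros; apply Hz; lia).
    replace (Cinv (Cmul (node_poly a (S m) z) (Csub z (Cof b))))
      with (Cmul (Cinv (Csub z (Cof b))) (Cinv (node_poly a (S m) z))) by (field; auto).
    rewrite Iz, <- sumC_mull.
    match goal with |- _ = Cadd _ (Cmul ?S ?X) => replace (Cmul S X) with (Cmul X S) by ring end.
    rewrite <- sumC_mull, <- sumC_add. apply sumC_ext. intros j Hj.
    (* [1 / ((z - a j) (z - b)) = (1 / (z - a j) - 1 / (z - b)) / (a j - b)] *)
    assert (Hj1 : node_prod a m j <> 0) by (apply node_prod_neq0; [auto | lia]).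
    assert (Hjb : a j - a (S (S m)) <> 0) by (apply Rminus_eq_contra, Hd; lia).
    assert (Csub z (Cof (a j)) <> C0) by (apply Hz; lia).
    rewrite node_prod_S, Rinv_mult, Cof_mul, !Cof_inv, Cof_sub by auto.
    assert (Csub (Cof (a j)) (Cof b) <> C0) by (rewrite <- Cof_sub; apply Cof_neq0; auto).
    assert (Csub (Cof b) (Cof (a j)) <> C0)
      by (rewrite <- Cof_sub; apply Cof_neq0; unfold b; lra).
    assert (Cof (node_prod a m j) <> C0) by (apply Cof_neq0; auto).
    fold b. field. auto.
Qed.

Lemma partial_fractions n : forall Q a z,
  (length Q <= n)%nat -> distinct_nodes a n ->
  (forall i, (1 <= i <= n)%nat -> Csub z (Cof (a i)) <> C0) ->
  Cmul (pevalC Q z) (Cinv (node_poly a n z)) =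
  pfrac n a (fun j => peval Q (a j) / node_prod a (pred n) j) z.
Proof.
  unfold pfrac. induction n as [|n IH]; intros Q a z Hl Hd Hz.
  - destruct Q; simpl in Hl; [|lia]. apply C_ext; simpl; ring.
  - set (b := a (S n)). set (Q1 := synth_div Q b).
    assert (Hzb : Csub z (Cof b) <> C0) by (apply Hz; lia).
    assert (Hn : node_poly a n z <> C0) by (apply node_poly_neq0; intros; apply Hz; lia).
    assert (Hb : node_prod a n (S n) <> 0) by (apply node_prod_neq0; [auto | lia]).
    assert (IQ1 := IH Q1 a z ltac:(unfold Q1; rewrite length_synth_div; lia)
                      (distinct_nodes_pred a n Hd) ltac:(intros; apply Hz; lia)).
    rewrite (pevalC_synth_div Q b z). fold Q1.
    replace (Cmul (Cadd (Cof (peval Q b)) (Cmul (Csub z (Cof b)) (pevalC Q1 z)))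
                  (Cinv (node_poly a (S n) z)))
      with (Cadd (Cmul (Cof (peval Q b)) (Cinv (node_poly a (S n) z)))
                 (Cmul (pevalC Q1 z) (Cinv (node_poly a n z))))
      by (change (node_poly a (S n) z) with (Cmul (node_poly a n z) (Csub z (Cof b)));
          field; auto).
    rewrite IQ1, (inv_node_poly_partial_fractions n a z Hd Hz). unfold pfrac. rewrite <- sumC_mull.
    rewrite !sumC_S, Cof_div, <- (Cof_inv (node_prod _ _ _)) by auto. simpl pred. fold b.
    match goal with |- Cadd (Cadd ?S1 ?T) ?S2 = Cadd ?S3 ?T' =>
      transitivity (Cadd (Cadd S1 S2) T); [ring|] end.
    f_equal; [|ring]. rewrite <- sumC_add. apply sumC_ext. intros j Hj.
    destruct n as [|n]; [lia|].
    assert (Hj0 : node_prod a n j <> 0)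
      by (apply node_prod_neq0; [apply distinct_nodes_pred; auto | lia]).
    assert (Hjb : a j - b <> 0) by (apply Rminus_eq_contra, Hd; lia).
    assert (Hres : peval Q b * / node_prod a (S n) j + peval Q1 (a j) / node_prod a n j =
                   peval Q (a j) / node_prod a (S n) j).
    { rewrite node_prod_S, (peval_synth_div Q b (a j)) by lia. fold b Q1. field; auto. }
    simpl pred. rewrite <- Hres, Cof_add, Cof_mul. ring.
Qed.

(* [|arg z| < pi/4]: a convex cone, and products of two of its elements have positive real part. *)
Definition quarter_sector (z : C) : Prop := - fst z < snd z < fst z.

Lemma quarter_sector_mul_Re_pos z w :
  quarter_sector z -> quarter_sector w -> 0 < fst (Cmul z w).
Proof. destruct z, w; unfold quarter_sector, Cmul; simpl; intros; nra. Qed.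

Lemma quarter_sector_comb z w al be :
  quarter_sector z -> quarter_sector w -> 0 <= al -> 0 <= be -> 0 < al + be ->
  quarter_sector (Cadd (Cmul (Cof al) z) (Cmul (Cof be) w)).
Proof.
  destruct z, w; unfold quarter_sector, Cadd, Cmul, Cof; cbn [fst snd]; intros.
  destruct (Rle_lt_or_eq_dec 0 al) as [|<-]; [auto | split; nra | split; nra].
Qed.

Definition bisector (a1 a2 : C) : C :=
  Cadd (Cmul (Cof (Cnorm a2)) a1) (Cmul (Cof (Cnorm a1)) a2).

Lemma bisector_comm a1 a2 : bisector a1 a2 = bisector a2 a1.
Proof. unfold bisector; ring. Qed.

Lemma Re_mul_conj_comm a1 a2 : fst (Cmul a1 (Cconj a2)) = fst (Cmul a2 (Cconj a1)).
Proof. destruct a1, a2; unfold Cmul, Cconj; simpl; ring. Qed.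

(* [a1 conj c = |a1| (|w| + w)] with [w = a1 conj a2], and [|arg (|w| + w)| = |arg w| / 2]. *)
Lemma quarter_sector_bisector a1 a2 :
  0 < fst (Cmul a1 (Cconj a2)) -> quarter_sector (Cmul a1 (Cconj (bisector a1 a2))).
Proof.
  destruct a1 as [x1 y1], a2 as [x2 y2].
  unfold quarter_sector, bisector, Cnorm, Cmul, Cadd, Cconj, Cof; cbn [fst snd].
  set (n1 := sqrt (x1 ^ 2 + y1 ^ 2)); set (n2 := sqrt (x2 ^ 2 + y2 ^ 2)). intros Hd.
  assert (E1 : n1 * n1 = x1 ^ 2 + y1 ^ 2) by (apply sqrt_sqrt; nra).
  assert (E2 : n2 * n2 = x2 ^ 2 + y2 ^ 2) by (apply sqrt_sqrt; nra).
  assert (0 <= n1) by apply sqrt_pos. assert (0 <= n2) by apply sqrt_pos.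
  assert (P1 : 0 < n1).
  { apply sqrt_lt_R0. destruct (Req_dec x1 0), (Req_dec y1 0); subst; nra. }
  assert (Hc : (y1 * x2 - x1 * y2) ^ 2 <= (n1 * n2) ^ 2)
    by (replace ((n1 * n2) ^ 2) with ((n1 * n1) * (n2 * n2)) by ring; rewrite E1, E2; nra).
  assert (0 <= n1 * n2) by nra.
  assert (Hc' : - (n1 * n2) <= y1 * x2 - x1 * y2 <= n1 * n2) by (split; nra).
  replace (x1 * (n2 * x1 - 0 * y1 + (n1 * x2 - 0 * y2)) -
           y1 * - (n2 * y1 + 0 * x1 + (n1 * y2 + 0 * x2)))
    with (n1 * (n1 * n2 + (x1 * x2 + y1 * y2)))
    by (transitivity (n2 * (n1 * n1) + n1 * (x1 * x2 + y1 * y2)); [ring | rewrite E1; ring]).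
  replace (x1 * - (n2 * y1 + 0 * x1 + (n1 * y2 + 0 * x2)) +
           y1 * (n2 * x1 - 0 * y1 + (n1 * x2 - 0 * y2)))
    with (n1 * (y1 * x2 - x1 * y2)) by ring.
  rewrite Ropp_mult_distr_r. split; apply Rmult_lt_compat_l; lra.
Qed.

Definition cone (a1 a2 x : C) : Prop :=
  exists al be, 0 <= al /\ 0 <= be /\ 0 < al + be /\
    x = Cadd (Cmul (Cof al) a1) (Cmul (Cof be) a2).

Lemma acute_cones_mul_half_plane a1 a2 b1 b2 :
  0 < fst (Cmul a1 (Cconj a2)) -> 0 < fst (Cmul b1 (Cconj b2)) ->
  exists l, forall x y, cone a1 a2 x -> cone b1 b2 y -> 0 < fst (Cmul l (Cmul x y)).
Proof.
  intros Ha Hb.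
  assert (quarter_in_cone : forall c1 c2 x, 0 < fst (Cmul c1 (Cconj c2)) -> cone c1 c2 x ->
            quarter_sector (Cmul x (Cconj (bisector c1 c2)))).
  { intros c1 c2 x Hc (al & be & Hal & Hbe & Hs & ->).
    replace (Cmul (Cadd (Cmul (Cof al) c1) (Cmul (Cof be) c2)) (Cconj (bisector c1 c2)))
      with (Cadd (Cmul (Cof al) (Cmul c1 (Cconj (bisector c1 c2))))
                 (Cmul (Cof be) (Cmul c2 (Cconj (bisector c2 c1)))))
      by (rewrite bisector_comm; ring).
    apply quarter_sector_comb; auto; apply quarter_sector_bisector; auto.
    rewrite Re_mul_conj_comm; auto. }
  exists (Cmul (Cconj (bisector a1 a2)) (Cconj (bisector b1 b2))). intros x y Hx Hy.
  replace (Cmul (Cmul (Cconj (bisector a1 a2)) (Cconj (bisector b1 b2))) (Cmul x y))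
    with (Cmul (Cmul x (Cconj (bisector a1 a2))) (Cmul y (Cconj (bisector b1 b2)))) by ring.
  apply quarter_sector_mul_Re_pos; apply quarter_in_cone; auto.
Qed.

Lemma Cnorm_sub_Cof_sq u m :
  Cnorm (Csub u (Cof m)) ^ 2 = (fst u - m) ^ 2 + snd u ^ 2.
Proof.
  unfold Cnorm, Csub, Cof; cbn [fst snd].
  rewrite pow2_sqrt by (apply Rplus_le_le_0_compat; apply pow2_ge_0). ring.
Qed.

(* Thales: from a point [u] of the open disk the diameter [ab] is seen under an obtuse angle. *)
Lemma in_diam_disk_Re a b u :
  in_diam_disk a b u -> 0 < fst (Cmul (Csub u (Cof a)) (Cconj (Csub (Cof b) u))).
Proof.
  unfold in_diam_disk. intros H.
  assert (Hsq : Cnorm (Csub u (Cof ((a + b) / 2))) ^ 2 < ((b - a) / 2) ^ 2)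
    by (pose proof (sqrt_pos (fst (Csub u (Cof ((a + b) / 2))) ^ 2 +
                              snd (Csub u (Cof ((a + b) / 2))) ^ 2)); unfold Cnorm in *; nra).
  rewrite Cnorm_sub_Cof_sq in Hsq.
  destruct u as [x y]; unfold Cmul, Csub, Cconj, Cof in *; cbn [fst snd] in *. nra.
Qed.

Lemma in_exterior_Re a b u : a < b ->
  in_exterior a b u -> 0 < fst (Cmul (Csub u (Cof a)) (Cconj (Csub u (Cof b)))).
Proof.
  unfold in_exterior. intros Hab H.
  assert (Hsq : Cnorm (Csub u (Cof ((a + b) / 2))) ^ 2 > ((b - a) / 2) ^ 2) by nra.
  rewrite Cnorm_sub_Cof_sq in Hsq.
  destruct u as [x y]; unfold Cmul, Csub, Cconj, Cof in *; cbn [fst snd] in *. nra.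
Qed.

(* [(b - a) (u - t) = (b - t) (u - a) + (t - a) (u - b)] *)
Lemma cone_sub_le a b u t : a < b -> t <= a ->
  cone (Csub u (Cof a)) (Csub (Cof b) u) (Cmul (Cof (b - a)) (Csub u (Cof t))).
Proof.
  intros. exists (b - t), (a - t). repeat split; try lra.
  destruct u; apply C_ext; simpl; ring.
Qed.

Lemma cone_sub_ge a b u t : a < b -> b <= t ->
  cone (Csub u (Cof a)) (Csub (Cof b) u) (Cmul (Cof (b - a)) (Csub (Cof t) u)).
Proof.
  intros. exists (t - b), (t - a). repeat split; try lra.
  destruct u; apply C_ext; simpl; ring.
Qed.

Lemma cone_sub_between a b u t : a < b -> a <= t <= b ->
  cone (Csub u (Cof a)) (Csub u (Cof b)) (Cmul (Cof (b - a)) (Csub u (Cof t))).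
Proof.
  intros. exists (b - t), (t - a). repeat split; try lra.
  destruct u; apply C_ext; simpl; ring.
Qed.

Lemma Re_pos_of_scaled l X c :
  0 < c -> 0 < fst (Cmul l (Cmul (Cof c) X)) -> 0 < fst (Cmul l X).
Proof. destruct l, X; unfold Cmul, Cof; cbn [fst snd]; intros; nra. Qed.

Lemma diam_disk_inv_half_plane a b u v : a < b ->
  in_diam_disk a b u -> in_diam_disk a b v ->
  exists l, forall t, t <= a \/ b <= t ->
    0 < fst (Cmul l (Cinv (Cmul (Csub u (Cof t)) (Csub v (Cof t))))).
Proof.
  intros Hab Hu Hv.
  destruct (acute_cones_mul_half_plane _ _ _ _ (in_diam_disk_Re a b u Hu)
              (in_diam_disk_Re a b v Hv)) as [l Hl].
  exists (Cconj l). intros t Ht. apply Re_conj_inv_pos.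
  apply (Re_pos_of_scaled _ _ ((b - a) * (b - a))); [nra|]. destruct Ht.
  - replace (Cmul (Cof ((b - a) * (b - a))) (Cmul (Csub u (Cof t)) (Csub v (Cof t))))
      with (Cmul (Cmul (Cof (b - a)) (Csub u (Cof t))) (Cmul (Cof (b - a)) (Csub v (Cof t))))
      by (rewrite Cof_mul; ring).
    apply Hl; apply cone_sub_le; auto.
  - replace (Cmul (Cof ((b - a) * (b - a))) (Cmul (Csub u (Cof t)) (Csub v (Cof t))))
      with (Cmul (Cmul (Cof (b - a)) (Csub (Cof t) u)) (Cmul (Cof (b - a)) (Csub (Cof t) v)))
      by (rewrite Cof_mul; ring).
    apply Hl; apply cone_sub_ge; auto.
Qed.

Lemma exterior_inv_half_plane a b u v : a < b ->
  in_exterior a b u -> in_exterior a b v ->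
  exists l, forall t, a <= t <= b ->
    0 < fst (Cmul l (Cinv (Cmul (Csub u (Cof t)) (Csub v (Cof t))))).
Proof.
  intros Hab Hu Hv.
  destruct (acute_cones_mul_half_plane _ _ _ _ (in_exterior_Re a b u Hab Hu)
              (in_exterior_Re a b v Hab Hv)) as [l Hl].
  exists (Cconj l). intros t Ht. apply Re_conj_inv_pos.
  apply (Re_pos_of_scaled _ _ ((b - a) * (b - a))); [nra|].
  replace (Cmul (Cof ((b - a) * (b - a))) (Cmul (Csub u (Cof t)) (Csub v (Cof t))))
    with (Cmul (Cmul (Cof (b - a)) (Csub u (Cof t))) (Cmul (Cof (b - a)) (Csub v (Cof t))))
    by (rewrite Cof_mul; ring).
  apply Hl; apply cone_sub_between; auto.
Qed.

(* [pfrac(z1) - pfrac(z2) = (z2 - z1) S] where all terms of [S] lie in one open half-plane. *)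
Lemma pfrac_injective n a rho l z1 z2 : (1 <= n)%nat ->
  (forall j, (1 <= j <= n)%nat -> 0 < rho j) ->
  (forall j, (1 <= j <= n)%nat -> Csub z1 (Cof (a j)) <> C0) ->
  (forall j, (1 <= j <= n)%nat -> Csub z2 (Cof (a j)) <> C0) ->
  (forall j, (1 <= j <= n)%nat ->
     0 < fst (Cmul l (Cinv (Cmul (Csub z1 (Cof (a j))) (Csub z2 (Cof (a j))))))) ->
  pfrac n a rho z1 = pfrac n a rho z2 -> z1 = z2.
Proof.
  intros Hn Hrho H1 H2 Hl E.
  set (S := sumC n (fun j => Cmul (Cof (rho j))
                    (Cinv (Cmul (Csub z1 (Cof (a j))) (Csub z2 (Cof (a j))))))).
  assert (HS : Cmul (Csub z2 z1) S = C0).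
  { unfold S. rewrite <- sumC_mull.
    transitivity (Csub (pfrac n a rho z1) (pfrac n a rho z2)); [|rewrite E; ring].
    unfold pfrac. match goal with |- _ = ?D => replace D with
      (sumC n (fun j => Cadd (Cmul (Cof (rho j)) (Cinv (Csub z1 (Cof (a j)))))
                 (Cmul (Copp C1) (Cmul (Cof (rho j)) (Cinv (Csub z2 (Cof (a j))))))))
      by (rewrite sumC_add, sumC_mull; ring) end.
    apply sumC_ext. intros j Hj. specialize (H1 j Hj). specialize (H2 j Hj). field; auto. }
  assert (HlS : 0 < fst (Cmul l S)).
  { unfold S. rewrite <- sumC_mull. apply sumC_Re_pos; auto. intros j Hj.
    specialize (Hl j Hj). specialize (Hrho j Hj).
    destruct l, (Cinv _); unfold Cmul, Cof in *; cbn [fst snd] in *. nra. }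
  symmetry. apply Csub_eq0.
  replace (Csub z2 z1) with (Cmul (Cmul (Csub z2 z1) S) (Cinv S))
    by (field; exact (Re_pos_neq0 l S HlS)).
  rewrite HS. ring.
Qed.

Lemma increasing_lt (k : nat) (a : nat -> R) :
  (forall i, (1 <= i < k)%nat -> a i < a (S i)) ->
  forall i j, (1 <= i)%nat -> (i < j)%nat -> (j <= k)%nat -> a i < a j.
Proof.
  intros Hinc i j Hi Hij Hj. induction Hij as [|j Hij IH].
  - apply Hinc; lia.
  - assert (a j < a (S j)) by (apply Hinc; lia). specialize (IH ltac:(lia)). lra.
Qed.

Lemma increasing_le (k : nat) (a : nat -> R) :
  (forall i, (1 <= i < k)%nat -> a i < a (S i)) ->
  forall i j, (1 <= i)%nat -> (i <= j)%nat -> (j <= k)%nat -> a i <= a j.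
Proof.
  intros Hinc i j Hi Hij Hj. destruct (Nat.eq_dec i j) as [->|]; [lra|].
  left; apply (increasing_lt k); auto; lia.
Qed.

Definition interlacing_residue (k : nat) (pr qr : nat -> R) (j : nat) : R :=
  prodR (k - 1) (fun i => pr j - qr i) / node_prod pr (pred k) j.

Section Interlacing.

Variables (k : nat) (p q : rpoly) (pr qr : nat -> R).
Hypotheses (hk : (2 <= k)%nat) (hdp : has_degree p k) (hdq : has_degree q (k - 1))
  (hpr : forall i, (1 <= i <= k)%nat -> peval p (pr i) = 0)
  (hpinc : forall i, (1 <= i < k)%nat -> pr i < pr (S i))
  (hqr : forall i, (1 <= i <= k - 1)%nat -> peval q (qr i) = 0)
  (hinter : forall i, (1 <= i <= k - 1)%nat -> pr i < qr i < pr (S i)).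

Lemma distinct_pr : distinct_nodes pr k.
Proof.
  intros i j Hi Hj Hij. apply Nat.lt_gt_cases in Hij as [H|H]; [|apply not_eq_sym];
    apply Rlt_not_eq, (increasing_lt k); auto; lia.
Qed.

Lemma distinct_qr : distinct_nodes qr (k - 1).
Proof.
  assert (Hlt : forall i j, (1 <= i)%nat -> (i < j)%nat -> (j <= k - 1)%nat -> qr i < qr j).
  { intros i j Hi Hij Hj. pose proof (hinter i ltac:(lia)). pose proof (hinter j ltac:(lia)).
    pose proof (increasing_le k pr hpinc (S i) j ltac:(lia) Hij ltac:(lia)). lra. }
  intros i j Hi Hj Hij. apply Nat.lt_gt_cases in Hij as [H|H]; [|apply not_eq_sym];
    apply Rlt_not_eq, Hlt; lia.
Qed.

(* Pairing the factor [pr j - qr i] with [pr j - pr (skip j i)]: both have the same sign. *)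
Lemma interlacing_residue_pos j : (1 <= j <= k)%nat -> 0 < interlacing_residue k pr qr j.
Proof.
  intros Hj. unfold interlacing_residue.
  assert (Hpi : node_prod pr (pred k) j <> 0)
    by (apply node_prod_neq0; rewrite Nat.succ_pred_pos by lia; [apply distinct_pr | lia]).
  assert (Hprod : 0 < prodR (k - 1) (fun i => pr j - qr i) * node_prod pr (pred k) j).
  { unfold node_prod. replace (pred k) with (k - 1)%nat by lia. rewrite <- prodR_mul.
    apply prodR_pos. intros i Hi. pose proof (hinter i ltac:(lia)). unfold skip.
    destruct (i <? j)%nat eqn:E; [apply Nat.ltb_lt in E | apply Nat.ltb_ge in E].
    - pose proof (increasing_le k pr hpinc (S i) j ltac:(lia) E ltac:(lia)). nra.
    - pose proof (increasing_le k pr hpinc j i ltac:(lia) E ltac:(lia)). nra. }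
  replace (prodR (k - 1) (fun i => pr j - qr i) / node_prod pr (pred k) j)
    with (prodR (k - 1) (fun i => pr j - qr i) * node_prod pr (pred k) j /
          (node_prod pr (pred k) j * node_prod pr (pred k) j)) by (field; auto).
  apply Rdiv_lt_0_compat; nra.
Qed.

Lemma q_div_p_pfrac : exists c, forall z, pevalC p z <> C0 ->
  Cdiv (pevalC q z) (pevalC p z) = Cmul (Cof c) (pfrac k pr (interlacing_residue k pr qr) z).
Proof.
  destruct hdp as [Lp _], hdq as [Lq _].
  destruct (pevalC_factor k p pr ltac:(lia) distinct_pr hpr) as [L HL].
  destruct (pevalC_factor (k - 1) q qr ltac:(lia) distinct_qr hqr) as [M HM].
  exists (M / L). intros z Hz.
  assert (HL0 : L <> 0) by (intros ->; apply Hz; rewrite HL; change (Cof 0) with C0; ring).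
  assert (Hnodes : forall i, (1 <= i <= k)%nat -> Csub z (Cof (pr i)) <> C0)
    by (intros; apply (Csub_Cof_neq0_of_root p); auto).
  assert (Hres : forall j, peval q (pr j) = M * prodR (k - 1) (fun i => pr j - qr i)).
  { intros j. apply Cof_inj. rewrite <- pevalC_Cof, HM, Cof_mul, <- prodC_Cof. unfold node_poly.
    f_equal. apply prodC_ext. intros; symmetry; apply Cof_sub. }
  assert (Hpf := partial_fractions k q pr z ltac:(lia) distinct_pr Hnodes).
  unfold Cdiv. rewrite HL.
  assert (node_poly pr k z <> C0) by (apply node_poly_neq0; auto).
  replace (Cmul (pevalC q z) (Cinv (Cmul (Cof L) (node_poly pr k z))))
    with (Cmul (Cinv (Cof L)) (Cmul (pevalC q z) (Cinv (node_poly pr k z))))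
    by (field; split; [|apply Cof_neq0]; auto).
  rewrite Hpf. unfold pfrac. rewrite Cof_div, <- !sumC_mull by auto. apply sumC_ext.
  intros j Hj. unfold interlacing_residue. unfold Rdiv. rewrite Hres, Rmult_assoc, Cof_mul.
  field. split; [|apply Cof_neq0]; auto.
Qed.

Lemma solutions_eq w z1 z2 l : w <> C0 ->
  is_solution p q w z1 -> is_solution p q w z2 ->
  (forall j, (1 <= j <= k)%nat ->
     0 < fst (Cmul l (Cinv (Cmul (Csub z1 (Cof (pr j))) (Csub z2 (Cof (pr j))))))) ->
  z1 = z2.
Proof.
  intros Hw [Hp1 Hs1] [Hp2 Hs2] Hl.
  destruct q_div_p_pfrac as [c Hc].
  rewrite Hc in Hs1, Hs2 by auto.
  apply (pfrac_injective k pr (interlacing_residue k pr qr) l); auto; try lia.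
  - apply interlacing_residue_pos.
  - intros; apply (Csub_Cof_neq0_of_root p); auto.
  - intros; apply (Csub_Cof_neq0_of_root p); auto.
  - assert (Hc0 : Cof c <> C0) by (intro E; apply Hw; rewrite <- Hs1, E; ring).
    transitivity (Cmul (Cinv (Cof c)) w); [rewrite <- Hs1 | rewrite <- Hs2]; field; auto.
Qed.

End Interlacing.

Theorem corollary1 (k : nat) (hk : (2 <= k)%nat)
  (p q : rpoly) (hdp : has_degree p k) (hdq : has_degree q (k - 1))
  (pr qr : nat -> R)
  (hpr : forall i, (1 <= i <= k)%nat -> peval p (pr i) = 0)
  (hpinc : forall i, (1 <= i < k)%nat -> pr i < pr (S i))
  (hqr : forall i, (1 <= i <= k - 1)%nat -> peval q (qr i) = 0)
  (hinter : forall i, (1 <= i <= k - 1)%nat -> pr i < qr i < pr (S i))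
  (r phi : R) (hr : 0 < r) (hphi : - PI < phi <= PI) :
  (forall j, (1 <= j <= k - 1)%nat ->
     at_most_one (fun z => in_diam_disk (pr j) (pr (S j)) z /\
                           is_solution p q (Cpolar r phi) z)) /\
  at_most_one (fun z => in_exterior (pr 1%nat) (pr k) z /\
                        is_solution p q (Cpolar r phi) z).
Proof.
  assert (Hw := Cpolar_neq0 r phi hr).
  split.
  - intros j Hj z1 z2 [D1 S1] [D2 S2].
    destruct (diam_disk_inv_half_plane _ _ _ _ (hpinc j ltac:(lia)) D1 D2) as [l Hl].
    apply (solutions_eq k p q pr qr hk hdp hdq hpr hpinc hqr hinter _ _ _ l Hw S1 S2).
    intros i Hi. apply Hl. destruct (Nat.le_gt_cases i j).
    + left; apply (increasing_le k pr hpinc); lia.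
    + right; apply (increasing_le k pr hpinc); lia.
  - intros z1 z2 [D1 S1] [D2 S2].
    destruct (exterior_inv_half_plane _ _ _ _ (increasing_lt k pr hpinc 1 k ltac:(lia) ltac:(lia) ltac:(lia))
                D1 D2) as [l Hl].
    apply (solutions_eq k p q pr qr hk hdp hdq hpr hpinc hqr hinter _ _ _ l Hw S1 S2).
    intros i Hi. apply Hl. split; apply (increasing_le k pr hpinc); lia.
Qed.
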